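(* Let $\Delta_{\{u_0,u_1,u_2\}}$ be a shortest-path triangle with Gromov product nodes $u_{0,1},u_{0,2},u_{1,2}$, and let $i\in\{0,1,2\}$. Let $v$ be a node on the subpath of $\mathcal P_\Delta(u_i,u_{i+2 \bmod 3})$ from $u_i$ to $u_{i,\,i+2\bmod 3}$, and $v'$ a node on the subpath of $\mathcal P_\Delta(u_i,u_{i+1\bmod 3})$ from $u_i$ to $u_{i,\,i+1\bmod 3}$, such that $d_{u_i,v}=d_{u_i,v'}$. Then $$d_{v,v'}\le 6\,\delta_{\Delta_{\{u_0,u_1,u_2\}}}+2.$$
   Context: $G=(V,E)$ is a finite connected undirected graph with $n\ge 4$ nodes and $d_{u,v}$ denotes the shortest-path distance (number of edges). For any four nodes $w_1,w_2,w_3,w_4$, form the three sums $d_{w_1,w_2}+d_{w_3,w_4}$, $d_{w_1,w_3}+d_{w_2,w_4}$, $d_{w_1,w_4}+d_{w_2,w_3}$, order them as $S\le M\le L$, and set $\delta_{w_1,w_2,w_3,w_4}=(L-M)/2$; $\delta_{\mathrm{worst}}(G)=\max_{w_1,w_2,w_3,w_4\in V}\delta_{w_1,w_2,w_3,w_4}$. A shortest-path triangle $\Delta_{\{u_0,u_1,u_2\}}$ consists of three distinct nodes $u_0,u_1,u_2$ together with chosen shortest paths $\mathcal P_\Delta(u_0,u_1)$, $\mathcal P_\Delta(u_0,u_2)$, $\mathcal P_\Delta(u_1,u_2)$ between the respective pairs. $\delta_{\Delta_{\{u_0,u_1,u_2\}}}$ is the maximum of $\delta_{w_1,w_2,w_3,w_4}$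 over all quadruples of nodes lying on these three paths (so $\delta_\Delta\le\delta_{\mathrm{worst}}(G)$). Gromov product nodes of the triangle are nodes $u_{0,1}\in\mathcal P_\Delta(u_0,u_1)$, $u_{0,2}\in\mathcal P_\Delta(u_0,u_2)$, $u_{1,2}\in\mathcal P_\Delta(u_1,u_2)$ with $d_{u_0,u_{0,1}}+d_{u_1,u_{0,1}}=d_{u_0,u_1}$, $d_{u_0,u_{0,2}}+d_{u_2,u_{0,2}}=d_{u_0,u_2}$, $d_{u_1,u_{1,2}}+d_{u_2,u_{1,2}}=d_{u_1,u_2}$, $d_{u_1,u_{0,1}}=d_{u_1,u_{1,2}}$, and $d_{u_0,u_{0,1}}=d_{u_0,u_{0,2}}=\lfloor (d_{u_0,u_1}+d_{u_0,u_2}-d_{u_1,u_2})/2\rfloor$. By convention $u_{1,0}=u_{0,1}$, $u_{2,0}=u_{0,2}$, $u_{2,1}=u_{1,2}$. *)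

From HB Require Import structures.
From mathcomp Require Import all_boot all_order all_algebra.
Set Implicit Arguments. Unset Strict Implicit. Unset Printing Implicit Defensive.
Import Order.TTheory GRing.Theory Num.Theory.

Section Defs.
Variables (T : finType) (e : rel T).

Definition walk_len (x y : T) (k : nat) : bool :=
  [exists p : k.-tuple T, path e x p && (last x p == y)].

(* shortest-path distance (number of edges); in a connected graph a shortest
   walk has fewer than #|T| edges, so searching k < #|T| is exhaustive *)
Definition dist (x y : T) : nat := find (walk_len x y) (iota 0 #|T|).

Definition shortest_path (a b : T) (s : seq T) : Prop :=
  exists p : seq T, [/\ s = a :: p, path e a p, last a p = b & size p = dist a b].

Definition delta_quad (w1 w2 w3 w4 : T) : rat :=
  let ss := sort leq [:: dist w1 w2 + dist w3 w4;
                         dist w1 w3 + dist w2 w4;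
                         dist w1 w4 + dist w2 w3] in
  (((nth 0 ss 2)%:R - (nth 0 ss 1)%:R) / 2)%R.

Definition delta_on (N : seq T) : rat :=
  \big[Num.max/0%R]_(w1 <- N) \big[Num.max/0%R]_(w2 <- N)
   \big[Num.max/0%R]_(w3 <- N) \big[Num.max/0%R]_(w4 <- N) delta_quad w1 w2 w3 w4.
End Defs.

Definition o0 : 'I_3 := @Ordinal 3 0 isT.
Definition o1 : 'I_3 := @Ordinal 3 1 isT.
Definition o2 : 'I_3 := @Ordinal 3 2 isT.
Definition addmod3 (i : 'I_3) (k : nat) : 'I_3 := inord ((i + k) %% 3).

(* Shortest-path triangle: nodes u 0, u 1, u 2 (distinct) and for i <> j a
   chosen shortest path P i j from u i to u j, with P j i = rev (P i j)
   (so there are exactly three chosen paths, traversable in both directions). *)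
Definition sp_triangle (T : finType) (e : rel T) (u : 'I_3 -> T)
    (P : 'I_3 -> 'I_3 -> seq T) : Prop :=
  injective u /\
  forall i j, i != j -> shortest_path e (u i) (u j) (P i j) /\ P j i = rev (P i j).

Definition tri_nodes (T : finType) (P : 'I_3 -> 'I_3 -> seq T) : seq T :=
  P o0 o1 ++ P o0 o2 ++ P o1 o2.

Definition delta_tri (T : finType) (e : rel T) (P : 'I_3 -> 'I_3 -> seq T) : rat :=
  delta_on e (tri_nodes P).

Definition gromov_nodes (T : finType) (e : rel T) (u : 'I_3 -> T)
    (P : 'I_3 -> 'I_3 -> seq T) (g : 'I_3 -> 'I_3 -> T) : Prop :=
  let d := dist e in
  [/\ (forall i j, g i j = g j i),
      [/\ g o0 o1 \in P o0 o1, g o0 o2 \in P o0 o2 & g o1 o2 \in P o1 o2],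
      [/\ d (u o0) (g o0 o1) + d (u o1) (g o0 o1) = d (u o0) (u o1),
          d (u o0) (g o0 o2) + d (u o2) (g o0 o2) = d (u o0) (u o2) &
          d (u o1) (g o1 o2) + d (u o2) (g o1 o2) = d (u o1) (u o2)],
      d (u o1) (g o0 o1) = d (u o1) (g o1 o2) &
      d (u o0) (g o0 o1) = (d (u o0) (u o1) + d (u o0) (u o2) - d (u o1) (u o2))./2 /\
      d (u o0) (g o0 o2) = (d (u o0) (u o1) + d (u o0) (u o2) - d (u o1) (u o2))./2].

Definition subpath_to (T : finType) (s : seq T) (x : T) : seq T :=
  take (index x s).+1 s.

(* Write x = u_i, y = u_{i+1}, z = u_{i+2} and t = d(x,v) = d(x,v').  As v lies
   on a geodesic from x to z and v' on one from x to y, the four-point condition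
   for (x,y,v,v') gives d(v,v') <= 2δ + max(0, t + d(y,v) - d(x,y)), and the one
   for (x,z,v,y) gives d(y,v) <= 2δ + max(d(x,y) - t, t + d(y,z) - d(x,z)).
   Since v and v' lie before the Gromov product nodes,
   2t <= d(x,y) + d(x,z) - d(y,z) + 1, hence d(v,v') <= 4δ + 1. *)
From HB Require Import structures.
From mathcomp Require Import all_boot all_order all_algebra.
From mathcomp Require Import zify lra.
Import Order.TTheory GRing.Theory Num.Theory.

Lemma last_take (T : Type) (x : T) s n : n <= size s -> last x (take n s) = nth x (x :: s) n.
Proof.
elim: s x n => [|y s IH] x [|n] //= hn.
by rewrite IH // (set_nth_default x).
Qed.

Section GraphDistance.
Set Implicit Arguments.
Unset Strict Implicit.
Variables (T : finType) (e : rel T).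
Hypothesis e_sym : symmetric e.
Hypothesis e_conn : forall x y : T, connect e x y.
Local Notation d := (dist e).

Lemma walk_lenP x y k :
  reflect (exists p, [/\ size p = k, path e x p & last x p = y]) (walk_len e x y k).
Proof.
apply: (iffP existsP) => [[p /andP[hp /eqP hl]]|[p [hs hp hl]]].
  by exists (val p); rewrite size_tuple.
have hk : size p == k by apply/eqP.
by exists (Tuple hk); rewrite /= hp hl eqxx.
Qed.

Lemma walk_len_cat x y z k1 k2 :
  walk_len e x y k1 -> walk_len e y z k2 -> walk_len e x z (k1 + k2).
Proof.
move=> /walk_lenP[p1 [<- h1 l1]] /walk_lenP[p2 [<- h2 l2]]; apply/walk_lenP.
by exists (p1 ++ p2); rewrite size_cat cat_path last_cat l1 h1 h2.
Qed.

Lemma walk_len_rev x y k : walk_len e x y k -> walk_len e y x k.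
Proof.
move=> /walk_lenP[p [<- hp hl]]; apply/walk_lenP.
exists (rev (belast x p)); split.
- by rewrite size_rev size_belast.
- by rewrite -hl (rev_path e) (@eq_path _ _ e) // => a b; rewrite /= e_sym.
- by case: p {hp} hl => [|a p] //= <-; rewrite rev_cons last_rcons.
Qed.

Lemma has_walk_len x y : has (walk_len e x y) (iota 0 #|T|).
Proof.
have /connectP[p hp ->] := e_conn x y.
have [p' hp' hu _] := shortenP hp.
apply/hasP; exists (size p'); last by apply/walk_lenP; exists p'.
by rewrite mem_iota /=; have := max_card (mem (x :: p')); rewrite (card_uniqP hu).
Qed.

Lemma dist_lt_card x y : d x y < #|T|.
Proof. by have := has_walk_len x y; rewrite has_find size_iota. Qed.

Lemma walk_len_dist x y : walk_len e x y (d x y).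
Proof.
have := nth_find 0 (has_walk_len x y).
by rewrite nth_iota ?add0n //; exact: dist_lt_card.
Qed.

Lemma dist_leq_walk x y k : walk_len e x y k -> d x y <= k.
Proof.
move=> hw; have [hk|hk] := leqP #|T| k.
  exact/ltnW/(leq_trans (dist_lt_card x y)).
rewrite leqNgt; apply/negP => hlt.
by have := before_find 0 hlt; rewrite nth_iota // add0n hw.
Qed.

Lemma dist_triangle x y z : d x z <= d x y + d y z.
Proof. exact/dist_leq_walk/walk_len_cat/walk_len_dist/walk_len_dist. Qed.

Lemma dist_sym x y : d x y = d y x.
Proof.
by apply/eqP; rewrite eqn_leq !dist_leq_walk // walk_len_rev // walk_len_dist.
Qed.

Lemma shortest_path_ends a b s : shortest_path e a b s -> a \in s /\ b \in s.
Proof. by move=> [p [-> _ <- _]]; rewrite mem_head mem_last. Qed.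

Lemma shortest_path_dist a b s w : shortest_path e a b s -> w \in s ->
  d a w = index w s /\ d a w + d w b = d a b.
Proof.
move=> [p [-> hp hl hs]] hw; set j := index w (a :: p).
have hj : j <= size p by move: hw; rewrite -index_mem.
have hjw : last a (take j p) = w by rewrite last_take // nth_index.
move: hp; rewrite -(cat_take_drop j p) cat_path hjw => /andP[hpa hpb].
have haw : walk_len e a w j.
  by apply/walk_lenP; exists (take j p); rewrite size_takel.
have hwb : walk_len e w b (size p - j).
  apply/walk_lenP; exists (drop j p); rewrite size_drop -hl; split => //.
  by rewrite -{2}(cat_take_drop j p) last_cat hjw.
have := dist_leq_walk haw; have := dist_leq_walk hwb; have := dist_triangle a w b.
rewrite -hs; lia.
Qed.

Lemma dist_subpath_to a b s x v : shortest_path e a b s -> x \in s ->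
  v \in subpath_to s x -> d a v <= d a x.
Proof.
move=> hs hx hv; have hvs : v \in s := mem_take hv.
by rewrite (shortest_path_dist hs hx).1 (shortest_path_dist hs hvs).1 -ltnS index_ltn.
Qed.

End GraphDistance.

Lemma sort3_add_mid_le (A B C : nat) : let ss := sort leq [:: A; B; C] in
  (A + nth 0 ss 1 <= B + nth 0 ss 2) || (A + nth 0 ss 1 <= C + nth 0 ss 2).
Proof.
rewrite /sort /=.
by case: (leqP A B) => /=; case: (leqP A C) => /=; case: (leqP B C) => /=; lia.
Qed.

Section FourPoint.
Set Implicit Arguments.
Unset Strict Implicit.
Variables (T : finType) (e : rel T).
Hypothesis e_sym : symmetric e.
Hypothesis e_conn : forall x y : T, connect e x y.
Local Notation d := (dist e).
Local Open Scope ring_scope.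

Lemma delta_on_ge0 N : 0 <= delta_on e N.
Proof. exact: bigmax_ge_id. Qed.

Lemma delta_quad_le_on N w1 w2 w3 w4 :
  w1 \in N -> w2 \in N -> w3 \in N -> w4 \in N ->
  delta_quad e w1 w2 w3 w4 <= delta_on e N.
Proof.
move=> h1 h2 h3 h4; rewrite /delta_on.
apply: le_trans (le_bigmax_seq _ _ _ _ h1 isT).
apply: le_trans (le_bigmax_seq _ _ _ _ h2 isT).
by apply: le_trans (le_bigmax_seq _ _ _ _ h3 isT); exact: le_bigmax_seq.
Qed.

Lemma four_point N w1 w2 w3 w4 : w1 \in N -> w2 \in N -> w3 \in N -> w4 \in N ->
  let D := delta_on e N in
  (d w1 w2)%:R + (d w3 w4)%:R <= (d w1 w3)%:R + (d w2 w4)%:R + 2 * D :> rat \/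
  (d w1 w2)%:R + (d w3 w4)%:R <= (d w1 w4)%:R + (d w2 w3)%:R + 2 * D :> rat.
Proof.
move=> h1 h2 h3 h4 D; have := delta_quad_le_on h1 h2 h3 h4; rewrite /delta_quad -/D.
have := sort3_add_mid_le (d w1 w2 + d w3 w4) (d w1 w3 + d w2 w4) (d w1 w4 + d w2 w3).
set M := nth 0 _ 1; set L := nth 0 _ 2.
by case/orP => h; [left|right]; move: h; rewrite -(ler_nat rat) !natrD; lra.
Qed.

Lemma dist_equidistant_le N x y z v v' (t : nat) :
  x \in N -> y \in N -> z \in N -> v \in N -> v' \in N ->
  d x v = t -> d x v' = t -> d x v + d v z = d x z -> d x v' + d v' y = d x y ->
  (t + t + d y z <= d x y + d x z + 1)%N ->
  (d v v')%:R <= 4 * delta_on e N + 1 :> rat.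
Proof.
move=> hx hy hz hv hv' hxv hxv' hvz hv'y ht.
have D0 := delta_on_ge0 N.
have {}hvz : (d x v)%:R + (d v z)%:R = (d x z)%:R :> rat by rewrite -hvz natrD.
have {}hv'y : (d x v')%:R + (d v' y)%:R = (d x y)%:R :> rat by rewrite -hv'y natrD.
move: ht; rewrite -(ler_nat rat) !natrD => ht.
have := four_point hx hz hv hy; have := four_point hx hy hv hv'.
rewrite /= (dist_sym e_sym e_conn z y) (dist_sym e_sym e_conn z v).
rewrite (dist_sym e_sym e_conn y v') (dist_sym e_sym e_conn y v).
rewrite hxv hxv' in hvz hv'y *.
by case=> h1; case=> h2; lra.
Qed.

End FourPoint.

Lemma ord3_cases (k : 'I_3) : [\/ k = o0, k = o1 | k = o2].
Proof.
case: k => [[|[|[|k]]] hk] //; [constructor 1|constructor 2|constructor 3];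
  exact: val_inj.
Qed.

Lemma neq_addmod3 (i : 'I_3) k : k %% 3 != 0 -> i != addmod3 i k.
Proof.
move=> hk; apply/eqP => /(congr1 val); rewrite /= inordK ?ltn_pmod //.
by have := ltn_ord i; lia.
Qed.

Lemma addmod3_neq (i : 'I_3) k l : k %% 3 != l %% 3 -> addmod3 i k != addmod3 i l.
Proof.
move=> hkl; apply/eqP => /(congr1 val); rewrite /= !inordK ?ltn_pmod //.
by lia.
Qed.

Section GromovTriangle.
Set Implicit Arguments.
Unset Strict Implicit.
Variables (T : finType) (e : rel T).
Hypothesis e_sym : symmetric e.
Hypothesis e_conn : forall x y : T, connect e x y.
Variables (u : 'I_3 -> T) (P : 'I_3 -> 'I_3 -> seq T) (g : 'I_3 -> 'I_3 -> T).
Hypothesis hT : sp_triangle e u P.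
Hypothesis hg : gromov_nodes e u P g.
Local Notation d := (dist e).

Lemma mem_sp_triangle_rev i j x : i != j -> (x \in P j i) = (x \in P i j).
Proof. by case: hT => _ hP /hP[_ ->]; rewrite mem_rev. Qed.

Lemma mem_tri_nodes i j x : i != j -> x \in P i j -> x \in tri_nodes P.
Proof.
rewrite /tri_nodes !mem_cat.
by case: (ord3_cases i) => ->; case: (ord3_cases j) => -> // _;
  rewrite ?(mem_sp_triangle_rev x (isT : o0 != o1)) ?(mem_sp_triangle_rev x (isT : o0 != o2))
          ?(mem_sp_triangle_rev x (isT : o1 != o2)) => ->; rewrite ?orbT.
Qed.

Lemma gromov_node_mem i j : i != j -> g i j \in P i j.
Proof.
case: hg => gs [m01 m02 m12] _ _ _.
by case: (ord3_cases i) => ->; case: (ord3_cases j) => -> // _;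
  rewrite ?(mem_sp_triangle_rev _ (isT : o0 != o1)) ?(mem_sp_triangle_rev _ (isT : o0 != o2))
          ?(mem_sp_triangle_rev _ (isT : o1 != o2)) // gs.
Qed.

Lemma gromov_node_dist_le i j k t : i != j -> i != k -> j != k ->
  t <= d (u i) (g i j) -> t <= d (u i) (g i k) ->
  t + t + d (u j) (u k) <= d (u i) (u j) + d (u i) (u k) + 1.
Proof.
case: hg => gs _ [sum01 sum02 sum12] eq1 [gp01 gp02].
have := dist_triangle e_conn (u o1) (u o0) (u o2).
have := dist_sym e_sym e_conn (u o0) (u o1); have := dist_sym e_sym e_conn (u o0) (u o2).
have := dist_sym e_sym e_conn (u o1) (u o2).
case: (ord3_cases i) => ->; case: (ord3_cases j) => ->; case: (ord3_cases k) => -> //;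
  rewrite ?(gs o1 o0) ?(gs o2 o0) ?(gs o2 o1); lia.
Qed.

End GromovTriangle.

Theorem theorem2 (T : finType) (e : rel T)
  (e_sym : symmetric e) (e_irr : irreflexive e)
  (e_conn : forall x y : T, connect e x y) (n_ge4 : 4 <= #|T|)
  (u : 'I_3 -> T) (P : 'I_3 -> 'I_3 -> seq T) (g : 'I_3 -> 'I_3 -> T)
  (hT : sp_triangle e u P) (hg : gromov_nodes e u P g)
  (i : 'I_3) (v v' : T)
  (hv : v \in subpath_to (P i (addmod3 i 2)) (g i (addmod3 i 2)))
  (hv' : v' \in subpath_to (P i (addmod3 i 1)) (g i (addmod3 i 1)))
  (hd : dist e (u i) v = dist e (u i) v') :
  ((dist e v v')%:R <= 6 * delta_tri e P + 2 :> rat)%R.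
Proof.
have hij : i != addmod3 i 1 by exact: neq_addmod3.
have hik : i != addmod3 i 2 by exact: neq_addmod3.
have hjk : addmod3 i 1 != addmod3 i 2 by exact: addmod3_neq.
move: (addmod3 i 1) (addmod3 i 2) hij hik hjk hv hv' => j k hij hik hjk hv hv'.
have [_ hP] := hT; have [spj _] := hP i j hij; have [spk _] := hP i k hik.
have [uij ujj] := shortest_path_ends spj; have [uik ukk] := shortest_path_ends spk.
have vk : v \in P i k := mem_take hv.
have v'j : v' \in P i j := mem_take hv'.
have hN := mem_tri_nodes hT.
suff : ((dist e v v')%:R <= 4 * delta_tri e P + 1 :> rat)%R.
  by have := delta_on_ge0 e (tri_nodes P); rewrite /delta_tri; lra.
apply: (dist_equidistant_le e_sym e_conn (hN _ _ _ hij uij) (hN _ _ _ hij ujj)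
  (hN _ _ _ hik ukk) (hN _ _ _ hik vk) (hN _ _ _ hij v'j) erefl (esym hd)
  (shortest_path_dist e_conn spk vk).2 (shortest_path_dist e_conn spj v'j).2).
apply: (gromov_node_dist_le e_sym e_conn hg hij hik hjk).
- by rewrite hd (dist_subpath_to e_conn spj (gromov_node_mem hT hg hij) hv').
- exact: (dist_subpath_to e_conn spk (gromov_node_mem hT hg hik) hv).
Qed.
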